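(* Let $I\subset[0,1]$ be a set satisfying the DCC and let $J_0\subset[0,1]$ be a finite set. Then the set $I_0=\{c\in I\mid \frac{m-1+f+kc}{m}\in J_0\text{ for some }k,m\in\mathbb{N}\text{ and }f\in D(I)\}$ is finite.
   Context: $\mathbb{N}$ denotes positive integers. $I_+=\{0\}\cup\{j\in[0,1]\mid j=\sum_{p=1}^l i_p,\ i_p\in I\}$ and $D(I)=\{a\le1\mid a=\frac{m-1+f}{m},\ m\in\mathbb{N},\ f\in I_+\}$. DCC: no infinite strictly decreasing sequence. *)

From Stdlib Require Import Reals List.
Open Scope R_scope.

Definition DCC (A : R -> Prop) : Prop :=
  ~ (exists u : nat -> R, (forall n, A (u n)) /\ (forall n, u (S n) < u n)).

Definition finite_set (A : R -> Prop) : Prop :=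
  exists l : list R, forall x, A x -> In x l.

Definition Iplus (I : R -> Prop) (j : R) : Prop :=
  j = 0 \/
  (0 <= j <= 1 /\
   exists l : list R, l <> nil /\ Forall I l /\ j = fold_right Rplus 0 l).

Definition DI (I : R -> Prop) (a : R) : Prop :=
  a <= 1 /\
  exists (m : nat) (f : R), (1 <= m)%nat /\ Iplus I f /\
    a = (INR m - 1 + f) / INR m.

From Stdlib Require Import Reals List Lra Lia Classical ClassicalEpsilon.
Open Scope R_scope.

(* Write j = (m - 1 + f + k c)/m, f = (m' - 1 + g)/m' with g ∈ I_+, and
   s = m (1 - j).  Clearing denominators gives the linear relation
        k m' c + g = 1 - s m',   with 0 <= s <= 1.
   If eps is the least positive element of I and c > 0, then k c <= 1 and
   m' c <= 1 bound k and m' by 1/eps, while s ranges over the finite set of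
   multiples m (1 - j) <= 1 with j ∈ J0.  So I0 \ {0} is covered by finitely
   many "pieces" {c ∈ I | a c + g = d for some g ∈ I_+} with a > 0. *)

Definition HasMin (A : R -> Prop) : Prop := forall T : R -> Prop,
  (forall x, T x -> A x) -> (exists x, T x) -> exists x, T x /\ forall y, T y -> x <= y.
Definition HasMax (A : R -> Prop) : Prop := forall T : R -> Prop,
  (forall x, T x -> A x) -> (exists x, T x) -> exists x, T x /\ forall y, T y -> y <= x.

Lemma archimedean_bound (eps : R) : 0 < eps -> exists N : nat, 1 < INR N * eps.
Proof.
  intros Heps. destruct (INR_unbounded (/ eps)) as [N HN]. exists N.
  apply Rmult_lt_compat_r with (r := eps) in HN; [|lra].
  rewrite Rinv_l in HN; lra.
Qed.

Lemma nat_lt_of_bound (eps : R) (k N : nat) :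
  0 < eps -> INR k * eps <= 1 -> 1 < INR N * eps -> (k < N)%nat.
Proof.
  intros Heps Hk HN. apply INR_lt, Rmult_lt_reg_r with eps; lra.
Qed.

Lemma dcc_sub (A B : R -> Prop) : (forall x, B x -> A x) -> DCC A -> DCC B.
Proof. intros HBA HA [u [Hu Hd]]. apply HA. exists u. split; auto. Qed.

(* With dependent choice, the DCC says that every nonempty subset has a least
   element: otherwise one builds a strictly decreasing sequence. *)
Lemma dcc_has_min (A : R -> Prop) : DCC A -> HasMin A.
Proof.
  intros HA T HTA [x0 Hx0]. apply NNPP; intro Hno.
  assert (smaller : forall x : {x | T x}, {y : {y | T y} | proj1_sig y < proj1_sig x}).
  { intros [x Hx]. apply constructive_indefinite_description.
    apply NNPP; intro Hmin. apply Hno. exists x. split; [exact Hx|].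
    intros y Hy. apply Rnot_lt_le. intro Hlt. apply Hmin. exists (exist _ y Hy). exact Hlt. }
  set (s := nat_rect (fun _ => {x | T x}) (exist _ x0 Hx0)
              (fun _ p => proj1_sig (smaller p))).
  apply HA. exists (fun n => proj1_sig (s n)). split.
  - intro n. apply HTA, (proj2_sig (s n)).
  - intro n. exact (proj2_sig (smaller (s n))).
Qed.

Lemma strictly_decreasing_lt (u : nat -> R) :
  (forall n, u (S n) < u n) -> forall p q, (p < q)%nat -> u q < u p.
Proof. intros Hd p q Hpq. induction Hpq; [apply Hd|]. specialize (Hd m). lra. Qed.

(* Any sequence in a DCC set has a nondecreasing subsequence: repeatedly pick
   an index realising the least value of the remaining tail. *)
Lemma dcc_nondecreasing_subsequence (A : R -> Prop) (u : nat -> R) :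
  DCC A -> (forall n, A (u n)) ->
  exists phi : nat -> nat, (forall n, (phi n < phi (S n))%nat) /\
                           (forall n, u (phi n) <= u (phi (S n))).
Proof.
  intros HA Hu.
  assert (tail_min : forall N, {n | (N <= n)%nat /\ forall m, (N <= m)%nat -> u n <= u m}).
  { intro N. apply constructive_indefinite_description.
    destruct (dcc_has_min A HA (fun x => exists m, (N <= m)%nat /\ x = u m))
      as [x [[n [Hn ->]] Hmin]].
    - intros x [m [_ ->]]. apply Hu.
    - exists (u N), N. split; auto.
    - exists n. split; [exact Hn|]. intros m Hm. apply Hmin. exists m. auto. }
  set (phi := nat_rect (fun _ => nat) (proj1_sig (tail_min O))
                (fun _ p => proj1_sig (tail_min (S p)))).
  assert (phi_is_min : forall n, exists N, phi n = proj1_sig (tail_min N)).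
  { intros [|n]; [exists O | exists (S (phi n))]; reflexivity. }
  assert (phi_incr : forall n, (phi n < phi (S n))%nat).
  { intro n. apply (proj1 (proj2_sig (tail_min (S (phi n))))). }
  exists phi. split; [exact phi_incr|]. intro n.
  destruct (phi_is_min n) as [N HN].
  pose proof (proj2 (proj2_sig (tail_min N)) (phi (S n))) as Hle.
  rewrite <- HN in Hle. apply Hle.
  pose proof (proj1 (proj2_sig (tail_min N))). specialize (phi_incr n). lia.
Qed.

Definition sumset (A B : R -> Prop) (t : R) : Prop := exists a b, A a /\ B b /\ t = a + b.

(* A strictly decreasing sequence a_n + b_n in A + B would give, along a
   subsequence where a_n is nondecreasing, a strictly decreasing b_n. *)
Lemma dcc_sumset (A B : R -> Prop) : DCC A -> DCC B -> DCC (sumset A B).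
Proof.
  intros HA HB [t [Ht Hd]].
  assert (split_t : forall n, {a | A a /\ B (t n - a)}).
  { intro n. apply constructive_indefinite_description.
    destruct (Ht n) as [a [b [Ha [Hb Hab]]]]. exists a. split; [exact Ha|].
    replace (t n - a) with b by lra. exact Hb. }
  set (a := fun n => proj1_sig (split_t n)).
  destruct (dcc_nondecreasing_subsequence A a HA (fun n => proj1 (proj2_sig (split_t n))))
    as [phi [Hphi Hmono]].
  apply HB. exists (fun n => t (phi n) - a (phi n)). split.
  - intro n. exact (proj2 (proj2_sig (split_t (phi n)))).
  - intro n. pose proof (strictly_decreasing_lt t Hd _ _ (Hphi n)).
    pose proof (Hmono n). lra.
Qed.

Fixpoint nsum (A : R -> Prop) (n : nat) : R -> Prop :=
  match n with
  | O => fun t => t = 0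
  | S n => sumset A (nsum A n)
  end.

Lemma dcc_nsum (A : R -> Prop) (n : nat) : DCC A -> DCC (nsum A n).
Proof.
  intros HA. induction n as [|n IH]; simpl.
  - intros [u [Hu Hd]]. specialize (Hd O). rewrite (Hu O), (Hu 1%nat) in Hd. lra.
  - apply dcc_sumset; assumption.
Qed.

(* A strictly decreasing sequence takes the value 0 at most once. *)
Lemma dcc_add_zero (A : R -> Prop) :
  (forall x, A x -> 0 <= x) -> DCC A -> DCC (fun x => A x \/ x = 0).
Proof.
  intros Hpos HA [u [Hu Hd]]. apply HA. exists (fun n => u (S n)). split.
  - intro n. destruct (Hu (S n)) as [H|H]; [exact H|]. exfalso.
    specialize (Hd (S n)).
    destruct (Hu (S (S n))) as [H'|H']; [apply Hpos in H'|]; lra.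
  - intro n. apply Hd.
Qed.

Lemma dcc_positive_gap (A : R -> Prop) :
  (forall x, A x -> 0 <= x) -> DCC A ->
  exists eps, 0 < eps /\ forall x, A x -> x = 0 \/ eps <= x.
Proof.
  intros Hpos HA.
  destruct (classic (exists x, A x /\ 0 < x)) as [Hex|Hnex].
  - destruct (dcc_has_min A HA (fun x => A x /\ 0 < x)) as [eps [[_ Heps] Hmin]];
      [intros x [Hx _]; exact Hx | exact Hex |].
    exists eps. split; [exact Heps|]. intros x Hx.
    destruct (Rle_lt_or_eq_dec 0 x (Hpos x Hx)) as [Hlt|Heq]; [right | left]; auto.
  - exists 1. split; [lra|]. intros x Hx. left.
    destruct (Rle_lt_or_eq_dec 0 x (Hpos x Hx)) as [Hlt|Heq]; [|auto].
    exfalso. eauto.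
Qed.

Lemma list_sum_nonneg (A : R -> Prop) (l : list R) :
  (forall x, A x -> 0 <= x) -> Forall A l -> 0 <= fold_right Rplus 0 l.
Proof. intros Hpos HF. induction HF; simpl; [lra|]. pose proof (Hpos x H). lra. Qed.

Lemma nsum_zero (B : R -> Prop) (n : nat) : B 0 -> nsum B n 0.
Proof.
  intros H0. induction n as [|n IH]; simpl; [reflexivity|].
  exists 0, 0. repeat split; auto. ring.
Qed.

(* If the nonzero elements of A are >= eps, a sum of elements of A below
   n eps has at most n nonzero terms, so it is a sum of n elements of A ∪ {0}. *)
Lemma list_sum_in_nsum (A : R -> Prop) (eps : R) :
  0 < eps -> (forall x, A x -> x = 0 \/ eps <= x) ->
  forall l, Forall A l -> forall n, fold_right Rplus 0 l < INR n * eps ->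
  nsum (fun x => A x \/ x = 0) n (fold_right Rplus 0 l).
Proof.
  intros Heps Hgap l HF.
  assert (Hpos : forall x, A x -> 0 <= x).
  { intros x Hx. destruct (Hgap x Hx); lra. }
  induction HF as [|x l Hx HF IH]; intros n Hn; cbn [fold_right] in *.
  - apply nsum_zero. now right.
  - pose proof (list_sum_nonneg A l Hpos HF) as Hl.
    destruct (Hgap x Hx) as [->|Hxe].
    + rewrite Rplus_0_l in *. apply IH, Hn.
    + destruct n as [|n]; [simpl in Hn; lra|].
      exists x, (fold_right Rplus 0 l). split; [now left|]. split; [|reflexivity].
      apply IH. rewrite S_INR in Hn. lra.
Qed.

(* I_+ has the DCC: its elements are sums of N elements of I ∪ {0}, where
   N eps > 1 for the gap eps of I. *)
Lemma dcc_Iplus (I : R -> Prop) :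
  (forall x, I x -> 0 <= x) -> DCC I -> DCC (Iplus I).
Proof.
  intros Hpos HI.
  destruct (dcc_positive_gap I Hpos HI) as [eps [Heps Hgap]].
  destruct (archimedean_bound eps Heps) as [N HN].
  apply dcc_sub with (nsum (fun x => I x \/ x = 0) N).
  - intros g [->|[[_ Hg1] [l [_ [HF ->]]]]].
    + apply nsum_zero. now right.
    + apply (list_sum_in_nsum I eps Heps Hgap l HF). lra.
  - apply dcc_nsum, dcc_add_zero; assumption.
Qed.

Lemma finite_sub (A B : R -> Prop) :
  (forall x, B x -> A x) -> finite_set A -> finite_set B.
Proof. intros H [l Hl]. exists l. auto. Qed.

Lemma finite_union {X : Type} (L : list X) (P : X -> R -> Prop) :
  (forall a, In a L -> finite_set (P a)) ->
  finite_set (fun x => exists a, In a L /\ P a x).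
Proof.
  induction L as [|a L IH]; intros H.
  - exists nil. intros x [b [[] _]].
  - destruct IH as [l1 Hl1]; [intros b Hb; apply H; now right|].
    destruct (H a (or_introl eq_refl)) as [l2 Hl2].
    exists (l1 ++ l2). intros x [b [[<-|Hb] Hx]]; apply in_or_app.
    + right. auto.
    + left. apply Hl1. eauto.
Qed.

(* First, every upper set {y ∈ A | x <= y} is finite: otherwise take
   the greatest z with an infinite upper set; the upper set of z is z together
   with that of the least element of A above z, which is finite. *)
Lemma min_max_finite (A : R -> Prop) : HasMin A -> HasMax A -> finite_set A.
Proof.
  intros Hmin Hmax.
  assert (upper_finite : forall x, A x -> finite_set (fun y => A y /\ x <= y)).
  { apply NNPP. intro Hn. apply not_all_ex_not in Hn. destruct Hn as [x Hx].
    apply imply_to_and in Hx.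
    destruct (Hmax (fun x => A x /\ ~ finite_set (fun y => A y /\ x <= y)))
      as [z [[Az Hz] Hzmax]]; [intros w [Aw _]; exact Aw | eauto |].
    apply Hz.
    destruct (classic (exists y, A y /\ z < y)) as [Habove|Hnone].
    - destruct (Hmin (fun y => A y /\ z < y)) as [y [[Ay Hzy] Hymin]];
        [intros w [Aw _]; exact Aw | exact Habove |].
      assert (Hy : finite_set (fun w => A w /\ y <= w)).
      { apply NNPP. intro Hnf. specialize (Hzmax y (conj Ay Hnf)). lra. }
      destruct Hy as [l Hl]. exists (z :: l). intros w [Aw Hzw].
      destruct (Rle_lt_or_eq_dec _ _ Hzw) as [Hlt|Heq]; [right | left; auto].
      apply Hl. split; [exact Aw|]. apply Hymin. auto.
    - exists (z :: nil). intros w [Aw Hzw]. left.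
      destruct (Rle_lt_or_eq_dec _ _ Hzw) as [Hlt|Heq]; [|auto].
      exfalso. eauto. }
  destruct (classic (exists x, A x)) as [Hne|He].
  - destruct (Hmin A (fun x H => H) Hne) as [x0 [Ax0 H0]].
    destruct (upper_finite x0 Ax0) as [l Hl]. exists l. auto.
  - exists nil. intros x Ax. apply He. eauto.
Qed.

(* If I and G have the DCC and a > 0, only finitely many c ∈ I satisfy
   a c + g = d with g ∈ G: least elements come from I, and the greatest c
   corresponds to the least admissible g. *)
Lemma linear_relation_finite (I G : R -> Prop) (a d : R) :
  DCC I -> DCC G -> 0 < a ->
  finite_set (fun c => I c /\ exists g, G g /\ a * c + g = d).
Proof.
  intros HI HG Ha. apply min_max_finite.
  - intros T HT Hne. apply (dcc_has_min I HI); auto. intros x Hx. apply HT, Hx.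
  - intros T HT [x0 Hx0].
    destruct (dcc_has_min G HG (fun g => G g /\ T ((d - g) / a))) as [g0 [[_ Tg0] Hg0]].
    + intros g [Hg _]; exact Hg.
    + destruct (HT x0 Hx0) as [_ [g [Gg Hx]]]. exists g. split; [exact Gg|].
      replace ((d - g) / a) with x0 by (field_simplify_eq; lra). exact Hx0.
    + exists ((d - g0) / a). split; [exact Tg0|]. intros y Ty.
      destruct (HT y Ty) as [_ [g [Gg Hy]]].
      assert (Hle : g0 <= g).
      { apply Hg0. split; [exact Gg|]. replace ((d - g) / a) with y by (field_simplify_eq; lra).
        exact Ty. }
      apply Rmult_le_reg_l with a; [exact Ha|].
      replace (a * ((d - g0) / a)) with (d - g0) by (field; lra). lra.
Qed.

Lemma bounded_multiples_finite (j : R) :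
  j <= 1 -> finite_set (fun s => exists m : nat, s = INR m * (1 - j) /\ s <= 1).
Proof.
  intros Hj. destruct (Rle_lt_or_eq_dec _ _ Hj) as [Hlt|Heq].
  - destruct (archimedean_bound (1 - j)) as [M HM]; [lra|].
    exists (map (fun m => INR m * (1 - j)) (seq 0 M)). intros s [m [-> Hs]].
    apply in_map_iff. exists m. split; [reflexivity|]. apply in_seq. split; [lia|].
    simpl. apply (nat_lt_of_bound (1 - j)); lra.
  - exists (0 :: nil). intros s [m [-> _]]. left. rewrite Heq. ring.
Qed.

Lemma scaled_multiples_finite (J0 : R -> Prop) :
  (forall j, J0 j -> j <= 1) -> finite_set J0 ->
  finite_set (fun s => exists j m, J0 j /\ s = INR m * (1 - j) /\ s <= 1).
Proof.
  intros HJ [LJ HLJ].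
  apply finite_sub with (fun s => exists j, In j LJ /\
    (J0 j /\ exists m : nat, s = INR m * (1 - j) /\ s <= 1)).
  - intros s [j [m [Hj Hs]]]. exists j. split; [apply HLJ, Hj|]. eauto.
  - apply finite_union. intros j _. destruct (classic (J0 j)) as [Hj|Hj].
    + apply finite_sub with (2 := bounded_multiples_finite j (HJ j Hj)).
      intros s [_ Hs]. exact Hs.
    + exists nil. intros s [Hj' _]. contradiction.
Qed.

(* Clearing denominators in j = (m - 1 + f + k c)/m with f = (m' - 1 + g)/m'
   gives k m' c + g = 1 - s m' for s = m (1 - j) <= 1; since k c <= 1 and
   m' c <= 1, a lower bound eps on c bounds k and m' by 1/eps. *)
Lemma I0_linear_relation (eps c g j : R) (k m m' N : nat) :
  0 < eps -> 1 < INR N * eps -> eps <= c -> 0 <= g -> j <= 1 ->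
  (1 <= k)%nat -> (1 <= m)%nat -> (1 <= m')%nat ->
  j = (INR m - 1 + (INR m' - 1 + g) / INR m' + INR k * c) / INR m ->
  (k < N)%nat /\ (m' < N)%nat /\ INR m * (1 - j) <= 1 /\
  INR k * INR m' * c + g = 1 - INR m * (1 - j) * INR m'.
Proof.
  intros Heps HN Hc Hg Hj hk hm hm' Hdef.
  assert (Hk : 1 <= INR k) by (apply (le_INR 1); exact hk).
  assert (Hm : 1 <= INR m) by (apply (le_INR 1); exact hm).
  assert (Hm' : 1 <= INR m') by (apply (le_INR 1); exact hm').
  assert (Hrel : INR k * INR m' * c + g = 1 - INR m * (1 - j) * INR m').
  { rewrite Hdef. field. lra. }
  assert (Hs0 : 0 <= INR m * (1 - j)) by nra.
  assert (Hkmc : INR k * INR m' * c <= 1).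
  { assert (0 <= INR m * (1 - j) * INR m') by (apply Rmult_le_pos; lra). lra. }
  assert (Hkc : INR k * c <= 1).
  { assert (INR k * c * 1 <= INR k * c * INR m') by (apply Rmult_le_compat_l; nra). lra. }
  assert (Hm'c : INR m' * c <= 1).
  { assert (1 * (INR m' * c) <= INR k * (INR m' * c)) by (apply Rmult_le_compat_r; nra).
    lra. }
  split; [apply (nat_lt_of_bound eps); nra|].
  split; [apply (nat_lt_of_bound eps); nra|].
  split; [|exact Hrel].
  assert (Hf0 : 0 <= (INR m' - 1 + g) / INR m').
  { apply Rle_mult_inv_pos; lra. }
  replace (INR m * (1 - j)) with (1 - (INR m' - 1 + g) / INR m' - INR k * c)
    by (rewrite Hdef; field; lra).
  nra.
Qed.

Theorem lemma5p2 (I J0 : R -> Prop)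
  (hI01 : forall x, I x -> 0 <= x <= 1)
  (hIdcc : DCC I)
  (hJ01 : forall x, J0 x -> 0 <= x <= 1)
  (hJfin : finite_set J0) :
  finite_set (fun c => I c /\
    exists (k m : nat) (f : R), (1 <= k)%nat /\ (1 <= m)%nat /\ DI I f /\
      J0 ((INR m - 1 + f + INR k * c) / INR m)).
Proof.
  assert (HI0 : forall x, I x -> 0 <= x) by (intros x Hx; apply hI01, Hx).
  destruct (dcc_positive_gap I HI0 hIdcc) as [eps [Heps Hgap]].
  destruct (archimedean_bound eps Heps) as [N HN].
  destruct (scaled_multiples_finite J0) as [Ls HLs];
    [intros j Hj; apply hJ01, Hj | exact hJfin |].
  (* Finitely many pieces cover the nonzero part of I0. *)
  destruct (finite_union Ls (fun s c => exists k, In k (seq 1 N) /\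
              exists m', In m' (seq 1 N) /\ I c /\ exists g, Iplus I g /\
                INR k * INR m' * c + g = 1 - s * INR m')) as [l Hl].
  { intros s _. apply finite_union. intros k Hk. apply finite_union. intros m' Hm'.
    apply in_seq in Hk, Hm'.
    apply linear_relation_finite; [exact hIdcc | apply dcc_Iplus; assumption |].
    apply Rmult_lt_0_compat; apply lt_0_INR; lia. }
  exists (0 :: l). intros c [Ic [k [m [f [hk [hm [[_ [m' [g [hm' [Hg ->]]]]] HJ]]]]]]].
  destruct (Hgap c Ic) as [->|Hc]; [now left | right].
  set (j := (INR m - 1 + (INR m' - 1 + g) / INR m' + INR k * c) / INR m) in HJ.
  assert (Hg0 : 0 <= g) by (destruct Hg as [->|[[Hg0 _] _]]; lra).
  destruct (I0_linear_relation eps c g j k m m' N) as [HkN [Hm'N [Hs Hrel]]];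
    try assumption; [apply hJ01, HJ | reflexivity |].
  apply Hl. exists (INR m * (1 - j)). split; [apply HLs; exists j, m; auto|].
  exists k. split; [apply in_seq; lia|].
  exists m'. split; [apply in_seq; lia|].
  split; [exact Ic|]. exists g. auto.
Qed.
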